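(* Let $f\in\mathfrak{D}$ have degree $j$ and $A=R/\operatorname{Ann}_R f$. For all integers $a\ge 0$ and $i$ there are $\mathsf{k}$-vector space isomorphisms $$Q_A(a)_i\cong\frac{(\mathfrak{m}^{\,i}\circ f)_{\le j-a-i}}{(\mathfrak{m}^{\,i}\circ f)_{\le j-a-1-i}+(\mathfrak{m}^{\,i+1}\circ f)_{\le j-a-i}},$$ and $$Q_A^\vee(a)_i\cong\frac{(\mathfrak{m}^{\,j-a-i}\circ f)_{\le i}}{(\mathfrak{m}^{\,j-a-i}\circ f)_{\le i-1}+(\mathfrak{m}^{\,j+1-a-i}\circ f)_{\le i}}.$$
   Context: Let $\mathsf{k}$ be a field, $R=\mathsf{k}\{x_1,\ldots,x_r\}$ the formal power series ring with maximal ideal $\mathfrak{m}=\mathfrak{m}_R$, and $\mathfrak{D}=\mathsf{k}_{DP}[X_1,\ldots,X_r]$ the divided power algebra, on which $R$ acts by contraction ($x^{\alpha}\circ X^{[\beta]}=X^{[\beta-\alpha]}$ if $\beta\ge\alpha$ componentwise, $0$ otherwise). For $f\in\mathfrak{D}$ of degree $j$, $A=R/\operatorname{Ann}_R f$ is Artinian Gorenstein of socle degree $j$ with maximal ideal $\mathfrak{m}_A$. Notation: $\mathfrak{m}^{\,s}\circ f=\{\varphi\circ f:\varphi\in\mathfrak{m}^s\}$, and for a subspace $V\subseteq\mathfrak{D}$, $V_{\le t}=V\cap\mathfrak{D}_{\le t}$ (elements of degree at most $t$). The ideal $C_A(a)$ of $A^*=\bigoplus_i\mathfrak{m}_A^i/\mathfrak{m}_A^{i+1}$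 has degree-$i$ part equal to the image in $\mathfrak{m}_A^i/\mathfrak{m}_A^{i+1}$ of $\mathfrak{m}_A^i\cap(0:\mathfrak{m}_A^{\,j+1-a-i})$, and $Q_A(a)=C_A(a)/C_A(a+1)$. The dual $Q_A^\vee(a)$ is graded so that $Q_A^\vee(a)_i=\operatorname{Hom}_{\mathsf{k}}(Q_A(a)_{j-a-i},\mathsf{k})$ (the pairing $Q_A(a)_i\times Q_A(a)_{j-a-i}\to\mathsf{k}$ induced by $(h,h')\mapsto (hh'\circ f)(0)$ is exact). *)

From HB Require Import structures.
From mathcomp Require Import all_boot all_order all_algebra.
From mathcomp Require Import mpoly.
Set Implicit Arguments. Unset Strict Implicit. Unset Printing Implicit Defensive.
Import Order.TTheory GRing.Theory Num.Theory.
Local Open Scope ring_scope.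

(* R = k{x_1,...,x_r}: formal power series, i.e. arbitrary coefficient       *)
(* functions on monomials x^alpha, alpha : 'X_{1..r}.                        *)
Definition pseries (k : fieldType) (r : nat) := 'X_{1..r} -> k.

Section Defs.
Variables (k : fieldType) (r : nat).
Local Notation R := (pseries k r).
(* D = k_DP[X_1..X_r], as a k-vector space: the divided power monomial       *)
(* X^[beta] is represented by the monomial 'X_[beta] of {mpoly k[r]}; only    *)
(* the vector space structure, the degree and the contraction action are      *)
(* used (never the product of D).                                            *)
Local Notation D := {mpoly k[r]}.

Definition ps_add (p q : R) : R := fun m => p m + q m.
Definition ps_scale (c : k) (p : R) : R := fun m => c * p m.
Definition ps_mul (p q : R) : R := fun m =>
  \sum_(g : 'X_{1..r < (mdeg m).+1} | ((g : 'X_{1..r}) <= m)%MM)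
     p g * q (m - g)%MM.

(* contraction: x^a o X^[b] = X^[b-a] if b >= a, 0 otherwise, extended      *)
(* linearly in both arguments (well defined since F has finite support):    *)
Definition contract (p : R) (F : D) : D :=
  \sum_(b <- msupp F) F@_b *:
     \sum_(g : 'X_{1..r < (mdeg b).+1} | ((g : 'X_{1..r}) <= b)%MM)
        p (b - g)%MM *: 'X_[(g : 'X_{1..r})].

Definition Ann (f : D) (p : R) : Prop := contract p f = 0.

(* m^s (s : int; m^s = R for s <= 0): series with no term of degree < s *)
Definition mpow (s : int) (p : R) : Prop :=
  forall m : 'X_{1..r}, ((mdeg m)%:Z < s)%R -> p m = 0.

Definition dle (t : int) (F : D) : Prop :=
  forall m, m \in msupp F -> ((mdeg m)%:Z <= t)%R.

Definition mcf (f : D) (s t : int) (F : D) : Prop :=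
  (exists p, mpow s p /\ F = contract p f) /\ dle t F.

(* ---- Objects of A = R / Ann_R f, described by their preimages in R ---- *)
Definition mApow (f : D) (s : int) (p : R) : Prop :=
  exists q, mpow s q /\ Ann f (ps_add p (ps_scale (-1) q)).
Definition annA (f : D) (s : int) (p : R) : Prop :=
  forall q, mpow s q -> Ann f (ps_mul p q).
(* preimage in R of the lift to m_A^i of C_A(a)_i, i.e. of
   (m_A^i \cap (0 : m_A^{j+1-a-i})) + m_A^{i+1} *)
Definition CApre (f : D) (j : nat) (a : int) (i : int) (p : R) : Prop :=
  exists u v, [/\ mApow f i u, annA f (j%:Z + 1 - a - i) u,
                  mApow f (i + 1) v & p = ps_add u v].

(* U/V ~= W/W' (k-linear isomorphism), for subspaces V <= U of R and
   W' <= W of D: there is a map, k-linear on U, sending U into W, with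
   U -> W/W' onto and with kernel exactly V. *)
Definition quot_iso (U V : R -> Prop) (W W' : D -> Prop) : Prop :=
  exists Phi : R -> D,
  [/\ forall c u v, U u -> U v ->
        Phi (ps_add (ps_scale c u) v) = c *: Phi u + Phi v,
      forall u, U u -> W (Phi u),
      forall w, W w -> exists2 u, U u & W' (w - Phi u)
    & forall u, U u -> (W' (Phi u) <-> V u)].

(* k-linear functionals on U vanishing on V, i.e. Hom_k(U/V, k) *)
Definition dual_elt (U V : R -> Prop) (l : R -> k) : Prop :=
  (forall c u v, U u -> U v -> l (ps_add (ps_scale c u) v) = c * l u + l v)
  /\ (forall v, V v -> l v = 0).

(* Hom_k(U/V, k) ~= W/W' : a map Psi : W -> Hom_k(U/V,k), k-linear, onto,
   with kernel exactly W'. *)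
Definition dual_quot_iso (U V : R -> Prop) (W W' : D -> Prop) : Prop :=
  exists Psi : D -> R -> k,
  [/\ forall w, W w -> dual_elt U V (Psi w),
      forall c w w' u, W w -> W w' -> U u ->
        Psi (c *: w + w') u = c * Psi w u + Psi w' u,
      forall w, W w -> ((forall u, U u -> Psi w u = 0) <-> W' w)
    & forall l, dual_elt U V l -> exists2 w, W w & forall u, U u -> Psi w u = l u].

End Defs.

(* Contraction with [f] identifies [A = R / Ann_R f] with [R o f].  It maps
   [m_A^s] onto [m^s o f] and, since [m^s] kills exactly the elements of degree
   [< s], it maps [(0 : m_A^s)] onto the elements of [R o f] of degree [< s].
   Hence, with [X = (m^i o f)_{<= j-a-i}], [X' = (m^i o f)_{<= j-a-1-i}] and
   [Z = m^{i+1} o f], the lifts of [C_A(a)_i] and [C_A(a+1)_i] become [X + Z] and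
   [X' + Z]; as [X' <= X], the second isomorphism theorem gives
   [(X + Z)/(X' + Z) = X/(X' + Z :&: X)], the first formula.  All these spaces lie
   in the finite-dimensional space [D_{<= j}], so a choice of bases identifies
   [Q_A(a)_{j-a-i}] with its dual, and the first formula at index [j-a-i] is the
   second one. *)

From HB Require Import structures.
From mathcomp Require Import all_boot all_order all_algebra.
From mathcomp Require Import mpoly.
From mathcomp Require Import zify ring.
From mathcomp.multinomials Require Import ssrcomplements.
From Stdlib Require Import Classical FunctionalExtensionality.
Set Implicit Arguments. Unset Strict Implicit. Unset Printing Implicit Defensive.
Import Order.TTheory GRing.Theory Num.Theory.
Local Open Scope ring_scope.

Section Contraction.
Variables (k : fieldType) (r : nat).
Local Notation R := (pseries k r).
Local Notation D := {mpoly k[r]}.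
Implicit Types (p q : R) (F G : D) (b g h : 'X_{1..r}).

Definition contractX p b : D :=
  \sum_(g : 'X_{1..r < (mdeg b).+1} | ((g : 'X_{1..r}) <= b)%MM)
     p (b - g)%MM *: 'X_[(g : 'X_{1..r})].

Lemma mcoeff_contractX p b h :
  (contractX p b)@_h = if (h <= b)%MM then p (b - h)%MM else 0.
Proof.
rewrite raddf_sum /=; under eq_bigr => g _ do rewrite mcoeffZ mcoeffX.
case: ifP => hb; last first.
  apply: big1 => g gb; case: eqP => [eg|_]; last by rewrite mulr0.
  by rewrite -eg gb in hb.
have hd : (mdeg h < (mdeg b).+1)%N by rewrite ltnS lemc_mdeg ?lem_leo.
rewrite (bigD1 (BMultinom hd)) //= eqxx mulr1 big1 ?addr0 // => g /andP[_ ng].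
case: eqP => [eg|_]; last by rewrite mulr0.
by rewrite -(inj_eq val_inj) /= eg eqxx in ng.
Qed.

Lemma mcoeff_contract p F n h : (msize F <= n)%N ->
  (contract p F)@_h =
  \sum_(b : 'X_{1..r < n}) F@_b * (if (h <= b)%MM then p (b - h)%MM else 0).
Proof.
move=> hn; rewrite /contract -/(contractX _ _).
rewrite (big_mksub 'X_{1..r < n}) ?msupp_uniq //=; last first.
  by move=> b /msize_mdeg_lt /leq_trans; apply.
rewrite big_rmcond /= => [|b /memN_msupp_eq0 ->]; last by rewrite scale0r.
by rewrite raddf_sum; apply: eq_bigr => b _ /=; rewrite mcoeffZ mcoeff_contractX.
Qed.

Lemma msize_le_mcoeff G n : (forall m, (n <= mdeg m)%N -> G@_m = 0) ->
  (msize G <= n)%N.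
Proof.
move=> G0; rewrite msizeE; apply/bigmax_leqP_seq => m mG _.
by rewrite ltnNge; apply/negP => /G0 m0; rewrite mcoeff_msupp m0 eqxx in mG.
Qed.

Lemma msize_contract p F : (msize (contract p F) <= msize F)%N.
Proof.
apply: msize_le_mcoeff => m hm; rewrite (mcoeff_contract _ _ (leqnn _)).
apply: big1 => b _; case: ifP => [hb|]; last by rewrite mulr0.
have := bmdeg b; have := lemc_mdeg (lem_leo hb); lia.
Qed.

Lemma contract_add p q F : contract (ps_add p q) F = contract p F + contract q F.
Proof.
apply/mpolyP => h; rewrite mcoeffD !(mcoeff_contract _ _ (leqnn _)) -big_split.
by apply: eq_bigr => b _; rewrite /= -mulrDr; case: ifP; rewrite ?addr0.
Qed.

Lemma contract_scale c p F : contract (ps_scale c p) F = c *: contract p F.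
Proof.
apply/mpolyP => h; rewrite mcoeffZ !(mcoeff_contract _ _ (leqnn _)) mulr_sumr.
by apply: eq_bigr => b _; case: ifP; rewrite ?mulr0 // mulrCA.
Qed.

Lemma contract0 F : contract (fun _ => 0) F = 0.
Proof.
apply/mpolyP => h; rewrite mcoeff0 (mcoeff_contract _ _ (leqnn _)).
by apply: big1 => b _; case: ifP; rewrite mulr0.
Qed.

Lemma subKm g b : (g <= b)%MM -> (b - (b - g))%MM = g.
Proof. by move/mnm_lepP=> gb; apply/mnmP=> i; rewrite !mnmBE subKn. Qed.

Lemma submAC b g h : (b - g - h)%MM = (b - h - g)%MM.
Proof. by apply/mnmP=> i; rewrite !mnmBE subnAC. Qed.

Lemma lem_subCr g h b : (g <= b)%MM -> (h <= b)%MM ->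
  (h <= b - g)%MM = (g <= b - h)%MM.
Proof.
move=> /mnm_lepP gb /mnm_lepP hb.
apply/mnm_lepP/mnm_lepP => le i; have := gb i; have := hb i; have := le i;
  rewrite !mnmBE; lia.
Qed.

Section BoundedComplement.
Variable n : nat.

Definition bcompl (b g : 'X_{1..r < n}) : 'X_{1..r < n} :=
  if ((g : 'X_{1..r}) <= b)%MM
  then BMultinom (leq_ltn_trans (mdegB b g) (bmdeg b)) else g.

Lemma bcomplE (b g : 'X_{1..r < n}) : (bcompl b g : 'X_{1..r}) =
  if ((g : 'X_{1..r}) <= b)%MM then (b - g)%MM else g.
Proof. by rewrite /bcompl; case: ifP. Qed.

Lemma bcomplK (b : 'X_{1..r < n}) : involutive (bcompl b).
Proof.
move=> g; apply: val_inj; rewrite /= !bcomplE.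
by case gb: ((g : 'X_{1..r}) <= b)%MM; rewrite ?gb // lem_subr subKm.
Qed.

End BoundedComplement.

Lemma ps_mul_bsum n p q c : (mdeg c < n)%N ->
  ps_mul p q c =
  \sum_(g : 'X_{1..r < n})
     (if ((g : 'X_{1..r}) <= c)%MM then p g * q (c - g)%MM else 0).
Proof.
move=> cn; rewrite /ps_mul (big_sub_widen _ 'X_{1..r < n}
  (fun g => g <= c)%MM (fun g => p g * q (c - g)%MM)) /=; last first.
  by move=> g /= /leq_trans; apply.
rewrite big_mkcond; apply: eq_bigr => g _.
case gc: ((g : 'X_{1..r}) <= c)%MM => //=.
by rewrite ltnS lemc_mdeg ?lem_leo.
Qed.

(* The substitution b' = b - g turns the convolution into an iterated contraction. *)
Lemma contract_mul_term n p q (b : 'X_{1..r < n}) h :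
  (if (h <= b)%MM then ps_mul p q (b - h)%MM else 0) =
  \sum_(b' : 'X_{1..r < n})
     (if ((b' : 'X_{1..r}) <= b)%MM then p (b - b')%MM else 0) *
     (if (h <= b')%MM then q (b' - h)%MM else 0).
Proof.
case: ifP => hb; last first.
  apply/esym/big1 => b' _; case: ifP => b'b; rewrite ?mul0r //.
  by case: ifP => hb'; [rewrite (lepm_trans hb' b'b) in hb | rewrite mulr0].
rewrite (@ps_mul_bsum n); last exact: leq_ltn_trans (mdegB _ _) (bmdeg b).
rewrite [RHS](reindex_inj (inv_inj (bcomplK b))); apply: eq_bigr => g _.
rewrite bcomplE; case gb: ((g : 'X_{1..r}) <= b)%MM; last first.
  rewrite gb mul0r; case: ifP => // gbh.
  by rewrite (lepm_trans gbh (lem_subr _ _)) in gb.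
by rewrite lem_subr subKm // (lem_subCr gb hb) submAC; case: ifP; rewrite ?mulr0.
Qed.

Lemma contract_mul p q F : contract (ps_mul p q) F = contract q (contract p F).
Proof.
apply/mpolyP => h.
rewrite (mcoeff_contract _ _ (leqnn _)) (mcoeff_contract _ _ (msize_contract p F)).
under [RHS]eq_bigr => b' _ do rewrite (mcoeff_contract _ _ (leqnn _)) mulr_suml.
rewrite exchange_big /=; apply: eq_bigr => b _.
by rewrite contract_mul_term mulr_sumr; apply: eq_bigr => b' _; rewrite mulrA.
Qed.

(* For [mdeg m >= t], testing with [q = x^m] reads off [G@_m] as the constant term. *)
Lemma mpow_contract_eq0_iff G (t : int) :
  (forall q, mpow t q -> contract q G = 0) <-> dle (t - 1) G.
Proof.
split=> [G0 m mG | Gt q qt].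
  rewrite leNgt; apply/negP => mt.
  pose q : R := fun x => (x == m)%:R.
  have /(congr1 (mcoeff 0%MM)) : contract q G = 0.
    by apply: G0 => x; rewrite /q; case: eqP => // ->; lia.
  have hd : (mdeg m < msize G)%N by apply: msize_mdeg_lt.
  have le0m b : (0%MM <= b)%MM by apply/mnm_lepP => i; rewrite mnmE.
  rewrite mcoeff0 (mcoeff_contract _ _ (leqnn _)) (bigD1 (BMultinom hd)) //=.
  rewrite big1 => [|b /negPf nb]; last first.
    by move: nb; rewrite le0m subm0 /q -(inj_eq val_inj) /= => ->; rewrite mulr0.
  rewrite le0m subm0 /q eqxx mulr1 addr0 => Gm0.
  by move: mG; rewrite mcoeff_msupp Gm0 eqxx.
apply/mpolyP => h; rewrite mcoeff0 (mcoeff_contract _ _ (leqnn _)).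
apply: big1 => b _; have [bG|] := boolP ((b : 'X_{1..r}) \in msupp G); last first.
  by move/memN_msupp_eq0 ->; rewrite mul0r.
case: ifP; rewrite ?mulr0 // => _; rewrite qt ?mulr0 //.
by have := Gt _ bG; have := mdegB b h; lia.
Qed.

End Contraction.

Lemma vspace_of_pred (K : fieldType) (vT : vectType K) (P : vT -> Prop) :
  P 0 -> (forall c u v, P u -> P v -> P (c *: u + v)) ->
  exists S : {vspace vT}, forall v, v \in S <-> P v.
Proof.
move=> P0 Plin.
suff grow n (S : {vspace vT}) : (\dim {:vT} - \dim S <= n)%N ->
    (forall v, v \in S -> P v) -> exists S' : {vspace vT}, forall v, v \in S' <-> P v.
  by apply: (grow _ 0%VS (leq_subr _ _)) => v; rewrite memv0 => /eqP ->.
elim: n S => [|n IHn] S codimS SP.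
  have [_ eq_full] := dimv_leqif_sup (subvf S).
  have full : ({:vT} <= S)%VS by rewrite -eq_full eqn_leq dimvS ?subvf //=; lia.
  by exists S => v; split=> [/SP //|_]; apply: subvP full _ (memvf v).
have [[v [Pv vS]]|] := classic (exists v, P v /\ v \notin S); last first.
  move=> noP; exists S => v; split=> [/SP //|Pv].
  by apply/negPn/negP => vS; apply: noP; exists v.
have SSv : (S <= S + <[v]>)%VS by apply: addvSl.
have : (\dim S < \dim (S + <[v]>))%N.
  have [le eq_Sv] := dimv_leqif_sup SSv; rewrite ltn_neqAle le andbT eq_Sv.
  by apply: contra vS => /subvP; apply; apply: subvP (addvSr _ _) _ (memv_line v).
move=> dimSv; apply: (IHn (S + <[v]>)%VS); first lia.
move=> x /memv_addP[u Su [y /vlineP[c ->] ->]].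
by rewrite addrC; apply: Plin => //; apply: SP.
Qed.

Section Coordinates.
Variables (k : fieldType) (r j : nat).
Local Notation D := {mpoly k[r]}.
Local Notation M := 'X_{1..r < j.+1}.

(* Coordinates on [D_{<= j}], which contains [R o f] when [f] has degree [j]. *)
Definition coords := {ffun M -> k^o}.

Definition to_coords (G : D) : coords := [ffun m : M => G@_(m : 'X_{1..r})].

Definition of_coords (e : coords) : D :=
  \sum_(m : M) e m *: 'X_[(m : 'X_{1..r})].

Lemma to_coords_is_linear : linear to_coords.
Proof. by move=> c G H; apply/ffunP => m; rewrite !ffunE mcoeffD mcoeffZ. Qed.

HB.instance Definition _ :=
  GRing.isLinear.Build k D coords _ to_coords to_coords_is_linear.

Lemma of_coords_is_linear : linear of_coords.
Proof.
move=> c e e'; rewrite /of_coords scaler_sumr -big_split /=.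
by apply: eq_bigr => m _; rewrite !ffunE scalerA scalerDl.
Qed.

HB.instance Definition _ :=
  GRing.isLinear.Build k coords D _ of_coords of_coords_is_linear.

Lemma of_coordsK : cancel of_coords to_coords.
Proof.
move=> e; apply/ffunP => m; rewrite ffunE raddf_sum /= (bigD1 m) //=.
rewrite mcoeffZ mcoeffX eqxx mulr1 big1 ?addr0 // => m' m'm.
by rewrite mcoeffZ mcoeffX (inj_eq val_inj) (negPf m'm) mulr0.
Qed.

Lemma msize_of_coords e : (msize (of_coords e) <= j.+1)%N.
Proof.
apply: msize_le_mcoeff => m hm; rewrite raddf_sum /=; apply: big1 => m' _.
rewrite mcoeffZ mcoeffX; case: eqP => [eqm|]; rewrite ?mulr0 //.
by have := bmdeg m'; rewrite eqm; lia.
Qed.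

Lemma to_coordsK G : (msize G <= j.+1)%N -> of_coords (to_coords G) = G.
Proof.
by move=> hG; rewrite {2}(mpolywE hG); apply: eq_bigr => m _; rewrite ffunE.
Qed.

Lemma to_coords_inj G H : (msize G <= j.+1)%N -> (msize H <= j.+1)%N ->
  to_coords G = to_coords H -> G = H.
Proof. by move=> hG hH eGH; rewrite -(to_coordsK hG) -(to_coordsK hH) eGH. Qed.

Definition is_dle_space (S : {vspace coords}) (t : int) :=
  forall e, e \in S <-> forall m : M, (t < (mdeg m)%:Z)%R -> e m = 0.

Lemma exists_dle_space t : exists S, is_dle_space S t.
Proof.
apply: vspace_of_pred => [m _|c u v hu hv m hm]; first by rewrite ffunE.
by rewrite !ffunE hu // hv // scaler0 addr0.
Qed.

Lemma dle_to_coords G t S : is_dle_space S t -> (msize G <= j.+1)%N ->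
  (dle t G <-> to_coords G \in S).
Proof.
move=> dleS hG; rewrite dleS; split=> [Gt m hm | G0 m mG].
  rewrite ffunE; have [mG|/memN_msupp_eq0 //] := boolP ((m : 'X_{1..r}) \in msupp G).
  by have := Gt _ mG; lia.
have hm : (mdeg m < j.+1)%N by apply: leq_trans (msize_mdeg_lt mG) hG.
rewrite leNgt; apply/negP => /(G0 (BMultinom hm)); rewrite ffunE /= => Gm0.
by move: mG; rewrite mcoeff_msupp Gm0 eqxx.
Qed.

End Coordinates.

Section ContractionWithF.
Variables (k : fieldType) (r : nat) (f : {mpoly k[r]}) (j : nat).
Hypothesis msize_f : msize f = j.+1.
Local Notation R := (pseries k r).
Local Notation D := {mpoly k[r]}.
Local Notation E := (coords k r j).

Definition contractf (p : R) : E := to_coords j (contract p f).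

Lemma msize_contractf p : (msize (contract p f) <= j.+1)%N.
Proof. by rewrite -msize_f msize_contract. Qed.

Lemma contractf_lin c p q :
  contractf (ps_add (ps_scale c p) q) = c *: contractf p + contractf q.
Proof. by rewrite /contractf contract_add contract_scale linearP. Qed.

Lemma contractf_add p q : contractf (ps_add p q) = contractf p + contractf q.
Proof. by rewrite /contractf contract_add raddfD. Qed.

Lemma contractf_scale c p : contractf (ps_scale c p) = c *: contractf p.
Proof. by rewrite /contractf contract_scale linearZ. Qed.

Lemma contractf0 : contractf (fun _ => 0) = 0.
Proof. by rewrite /contractf contract0 raddf0. Qed.

Definition is_mpow_space (S : {vspace E}) (s : int) :=
  forall e, e \in S <-> exists2 q, mpow s q & e = contractf q.

Lemma exists_mpow_space s : exists S, is_mpow_space S s.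
Proof.
apply: vspace_of_pred => [|c _ _ [q1 hq1 ->] [q2 hq2 ->]].
  by exists (fun _ => 0); rewrite ?contractf0.
exists (ps_add (ps_scale c q1) q2); last by rewrite contractf_lin.
by move=> m hm; rewrite /ps_add /ps_scale hq1 // hq2 // mulr0 addr0.
Qed.

Lemma mApow_contractf p s S : is_mpow_space S s ->
  (mApow f s p <-> contractf p \in S).
Proof.
move=> powS; rewrite powS; split=> [[q [hq]]|[q hq pq]].
  rewrite /Ann contract_add contract_scale scaleN1r => /eqP.
  by rewrite subr_eq0 => /eqP pq; exists q; rewrite /contractf ?pq.
exists q; split=> //; rewrite /Ann contract_add contract_scale scaleN1r.
by rewrite (to_coords_inj (msize_contractf p) (msize_contractf q) pq) subrr.
Qed.

Lemma annA_contractf p s S : is_dle_space S (s - 1) ->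
  (annA f s p <-> contractf p \in S).
Proof.
move=> dleS; rewrite -(dle_to_coords dleS (msize_contractf p)).
rewrite -mpow_contract_eq0_iff /annA /Ann.
by split=> p0 q /p0; rewrite contract_mul.
Qed.

Lemma mcf_to_coords F s t SM SD : is_mpow_space SM s -> is_dle_space SD t ->
  (mcf f s t F <-> (msize F <= j.+1)%N /\ to_coords j F \in (SM :&: SD)%VS).
Proof.
move=> powS dleS; split=> [[[p [hp ->]] Ft] | [hF /memv_capP[/powS[q hq Fq] FS]]].
  split; first exact: msize_contractf.
  apply/memv_capP; split; first by apply/powS; exists p.
  exact/(dle_to_coords dleS (msize_contractf p)).
split; last exact/(dle_to_coords dleS hF).
by exists q; split=> //; apply: to_coords_inj hF (msize_contractf q) Fq.
Qed.

Lemma mcf_sum_to_coords F s1 t1 s2 t2 SM1 SD1 SM2 SD2 :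
  is_mpow_space SM1 s1 -> is_dle_space SD1 t1 ->
  is_mpow_space SM2 s2 -> is_dle_space SD2 t2 ->
  ((exists F1 F2, [/\ mcf f s1 t1 F1, mcf f s2 t2 F2 & F = F1 + F2]) <->
   (msize F <= j.+1)%N /\ to_coords j F \in (SM1 :&: SD1 + SM2 :&: SD2)%VS).
Proof.
move=> pow1 dle1 pow2 dle2; split.
  move=> [F1 [F2 [/(mcf_to_coords _ pow1 dle1)[hF1 F1S]]]].
  move=> /(mcf_to_coords _ pow2 dle2)[hF2 F2S] ->; rewrite raddfD memv_add //.
  by rewrite (leq_trans (msizeD_le _ _)) // geq_max hF1.
move=> [hF /memv_addP[e1 e1S [e2 e2S Fe]]].
exists (of_coords e1), (of_coords e2); split.
- by apply/(mcf_to_coords _ pow1 dle1); rewrite of_coordsK msize_of_coords.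
- by apply/(mcf_to_coords _ pow2 dle2); rewrite of_coordsK msize_of_coords.
- by rewrite -raddfD -Fe /= to_coordsK.
Qed.

Lemma CApre_contractf p (a i : int) SMi SMi1 SD :
  is_mpow_space SMi i -> is_mpow_space SMi1 (i + 1) ->
  is_dle_space SD (j%:Z - a - i) ->
  (CApre f j a i p <-> contractf p \in (SMi :&: SD + SMi1)%VS).
Proof.
move=> powi powi1 dleS.
have annS u : annA f (j%:Z + 1 - a - i) u <-> contractf u \in SD.
  by apply: annA_contractf; have -> : j%:Z + 1 - a - i - 1 = j%:Z - a - i by ring.
split=> [[u [v [/(mApow_contractf _ powi) ui /annS uS
                /(mApow_contractf _ powi1) vi ->]]]|].
  by rewrite contractf_add memv_add // memv_cap ui.
move=> /memv_addP[_ /memv_capP[/powi[q1 hq1 ->] q1S] [_ /powi1[q2 hq2 ->] pq]].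
exists q1, (ps_add p (ps_scale (-1) q1)); split.
- by apply/(mApow_contractf _ powi)/powi; exists q1.
- exact/annS.
- apply/(mApow_contractf _ powi1); rewrite contractf_add contractf_scale pq.
  by rewrite scaleN1r addrAC subrr add0r; apply/powi1; exists q2.
- by apply: functional_extensionality => m; rewrite /ps_add /ps_scale; ring.
Qed.

End ContractionWithF.

Lemma mem_addv_pi2_modular (K : fieldType) (vT : vectType K) (X X' Z : {vspace vT}) e :
  (X' <= X)%VS -> e \in (X + Z)%VS ->
  (addv_pi2 Z X e \in (X' + Z :&: X)%VS) = (e \in (X' + Z)%VS).
Proof.
move=> sX'X eXZ; set pi2 := addv_pi2 Z X.
have pi12 x : x \in (Z + X)%VS -> addv_pi1 Z X x + pi2 x = x by apply: addv_pi1_pi2.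
apply/idP/idP => /memv_addP[x x_X'] => [[y /memv_capP[y_Z _] pi2e] | [z z_Z ->]].
  rewrite -(pi12 e); last by rewrite addvC.
  by rewrite pi2e addrCA memv_add // memvD ?memv_pi1.
rewrite linearD /= addv_pi2_id; last exact: subvP sX'X _ x_X'.
rewrite memv_add // memv_cap memv_pi2 andbT.
have <- : z - addv_pi1 Z X z = pi2 z.
  by rewrite -{1}(pi12 z) ?(subvP (addvSl _ _)) // addrAC subrr add0r.
by rewrite memvB // memv_pi1.
Qed.

Section QuotientOfModularPair.
Variables (k : fieldType) (r j : nat).
Local Notation R := (pseries k r).
Local Notation D := {mpoly k[r]}.
Local Notation E := (coords k r j).
Variable T : R -> E.
Hypothesis T_lin : forall c p q, T (ps_add (ps_scale c p) q) = c *: T p + T q.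

(* The second isomorphism theorem [(X + Z)/(X' + Z) = X/(X' + Z :&: X)], pulled
   back along [T]. *)
Lemma quot_iso_of_modular (U V : R -> Prop) (W W' : D -> Prop) (X X' Z : {vspace E}) :
  (X' <= X)%VS -> (forall e, e \in X -> exists p, e = T p) ->
  (forall p, U p <-> T p \in (X + Z)%VS) -> (forall p, V p <-> T p \in (X' + Z)%VS) ->
  (forall w, W w <-> (msize w <= j.+1)%N /\ to_coords j w \in X) ->
  (forall w, W' w <-> (msize w <= j.+1)%N /\ to_coords j w \in (X' + Z :&: X)%VS) ->
  quot_iso U V W W'.
Proof.
move=> sX'X XT UE VE WE W'E.
exists (fun p => of_coords (addv_pi2 Z X (T p))); split.
- by move=> c u v _ _; rewrite T_lin !linearP.
- by move=> u _; apply/WE; rewrite of_coordsK msize_of_coords memv_pi2.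
- move=> w /WE[hw wX]; have [p Tp] := XT _ wX; exists p.
    by apply/UE; rewrite -Tp; apply: subvP (addvSl _ _) _ wX.
  rewrite -Tp addv_pi2_id // to_coordsK // subrr.
  by apply/W'E; rewrite msize0 raddf0 mem0v.
- move=> u /UE uXZ; rewrite W'E VE of_coordsK mem_addv_pi2_modular //.
  by split=> [[]|] //; rewrite msize_of_coords.
Qed.

End QuotientOfModularPair.

Section PseriesLinearCombination.
Variables (k : fieldType) (r : nat).
Local Notation R := (pseries k r).

Definition ps_lincomb (I : Type) (s : seq I) (c : I -> k) (u : I -> R) : R :=
  foldr (fun i acc => ps_add (ps_scale (c i) (u i)) acc) (fun _ => 0) s.

Variable U : R -> Prop.
Hypotheses (U0 : U (fun _ => 0))
  (U_lin : forall c u v, U u -> U v -> U (ps_add (ps_scale c u) v)).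

Lemma ps_lincomb_closed (I : Type) (s : seq I) c u :
  (forall i, U (u i)) -> U (ps_lincomb s c u).
Proof. by move=> Uu; elim: s => //= i s IHs; apply: U_lin. Qed.

Lemma linear_on_ps_lincomb (V : lmodType k) (phi : R -> V) :
  (forall c u v, U u -> U v -> phi (ps_add (ps_scale c u) v) = c *: phi u + phi v) ->
  forall (I : Type) (s : seq I) c u, (forall i, U (u i)) ->
  phi (ps_lincomb s c u) = \sum_(i <- s) c i *: phi (u i).
Proof.
move=> phi_lin I s c u Uu; elim: s => [|i s IHs]; last first.
  by rewrite big_cons -IHs -phi_lin //; apply: ps_lincomb_closed.
have zeroE : ps_add (ps_scale (-1) (fun _ => 0)) (fun _ => 0) = (fun _ => 0) :> R.
  by apply: functional_extensionality => m; rewrite /ps_add /ps_scale mulr0 addr0.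
by rewrite big_nil /= -zeroE phi_lin // scaleN1r addNr.
Qed.

End PseriesLinearCombination.

Lemma sum_mul_delta (R : pzSemiRingType) (I : finType) (c : I -> R) i' :
  \sum_i c i * (i == i')%:R = c i'.
Proof.
rewrite (bigD1 i') //= eqxx mulr1 big1 ?addr0 // => i /negPf ii'.
by rewrite ii' mulr0.
Qed.

Section DualOfQuotient.
Variables (k : fieldType) (r j : nat).
Local Notation R := (pseries k r).
Local Notation D := {mpoly k[r]}.
Local Notation E := (coords k r j).
Variables (U V : R -> Prop) (W W' : D -> Prop) (SW SW' : {vspace E}) (Phi : R -> D).
Hypotheses (U0 : U (fun _ => 0))
  (U_lin : forall c u v, U u -> U v -> U (ps_add (ps_scale c u) v))
  (VU : forall v, V v -> U v)
  (WE : forall w, W w <-> (msize w <= j.+1)%N /\ to_coords j w \in SW)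
  (W'E : forall w, W' w <-> (msize w <= j.+1)%N /\ to_coords j w \in SW').
Hypotheses
  (Phi_lin : forall c u v, U u -> U v ->
     Phi (ps_add (ps_scale c u) v) = c *: Phi u + Phi v)
  (Phi_W : forall u, U u -> W (Phi u))
  (Phi_onto : forall w, W w -> exists2 u, U u & W' (w - Phi u))
  (Phi_ker : forall u, U u -> (W' (Phi u) <-> V u)).

Local Notation C := (SW :\: SW')%VS.
Local Notation n := (\dim C).
Local Notation pi := (addv_pi1 SW SW').

(* Coordinates of [W / W'], read in a basis of the complement [C] of [SW'] in [SW]. *)
Definition qcoord (w : D) (i : 'I_n) : k := coord (vbasis C) i (pi (to_coords j w)).

Lemma qcoord_lin c w w' i : qcoord (c *: w + w') i = c * qcoord w i + qcoord w' i.
Proof. by rewrite /qcoord !linearP. Qed.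

Lemma pi_C e : pi e \in C. Proof. exact: memv_pi. Qed.

Lemma pi_id e : e \in C -> pi e = e.
Proof. by apply: daddv_pi_id; apply: capv_diff. Qed.

Lemma qcoord_of_coords e i : e \in C -> qcoord (of_coords e) i = coord (vbasis C) i e.
Proof. by move=> eC; rewrite /qcoord of_coordsK pi_id. Qed.

Lemma qcoord_W' w i : W' w -> qcoord w i = 0.
Proof.
move=> /W'E[_ wSW']; rewrite /qcoord.
have := addv_pi1_pi2 (subvP (addvSr SW SW') _ wSW').
by rewrite addv_pi2_id // => /(canRL (addrK _)); rewrite subrr => ->; rewrite linear0.
Qed.

Lemma W'_qcoord w : W w -> (forall i, qcoord w i = 0) -> W' w.
Proof.
move=> /WE[hw wSW] w0; apply/W'E; split=> //.
have := addv_pi1_pi2 (subvP (addvSl SW SW') _ wSW).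
rewrite (coord_vbasis (pi_C _)) big1 ?add0r => [<-|i _]; first exact: memv_pi2.
by rewrite -/(qcoord w i) w0 scale0r.
Qed.

Lemma exists_basis_preimages : exists uk : 'I_n -> R,
  forall i, U (uk i) /\ forall i', qcoord (Phi (uk i)) i' = (i == i')%:R.
Proof.
suff /fin_all_exists[uk] : forall i : 'I_n, exists u : R,
    U u /\ forall i', qcoord (Phi u) i' = (i == i')%:R by exists uk.
move=> i.
have biC : (vbasis C)`_i \in C by rewrite vbasis_mem // mem_nth // size_tuple.
have /Phi_onto[u Uu W'bu] : W (of_coords (vbasis C)`_i).
  apply/WE; rewrite of_coordsK msize_of_coords; split=> //.
  exact: subvP (diffvSl _ _) _ biC.
exists u; split=> // i'; have := qcoord_W' i' W'bu.
rewrite -scaleN1r addrC qcoord_lin mulN1r qcoord_of_coords // => /eqP.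
rewrite addrC subr_eq0 coord_free; last exact: basis_free (vbasisP C).
by move=> /eqP <-.
Qed.

Lemma qcoord_sum (I : Type) (s : seq I) (c : I -> k) (w : I -> D) i :
  qcoord (\sum_(l <- s) c l *: w l) i = \sum_(l <- s) c l * qcoord (w l) i.
Proof. by rewrite /qcoord !linear_sum; apply: eq_bigr => l _; rewrite !linearZ. Qed.

Section BasisPreimages.
Variable uk : 'I_n -> R.
Hypotheses (U_uk : forall i, U (uk i))
  (qcoord_uk : forall i i', qcoord (Phi (uk i)) i' = (i == i')%:R).

Definition qproj (u : R) : R := ps_lincomb (index_enum 'I_n) (qcoord (Phi u)) uk.

Lemma U_qproj u : U (qproj u).
Proof. apply: (@ps_lincomb_closed _ _ U) => //. Qed.

Lemma Phi_qproj u : Phi (qproj u) = \sum_(i < n) qcoord (Phi u) i *: Phi (uk i).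
Proof.
exact: (@linear_on_ps_lincomb _ _ U U0 U_lin _ Phi Phi_lin _ (index_enum _)).
Qed.

Lemma V_sub_qproj u : U u -> V (ps_add (ps_scale (-1) (qproj u)) u).
Proof.
move=> Uu; have Uu' := U_lin (-1) (U_qproj u) Uu.
apply/(Phi_ker Uu')/W'_qcoord => [|i']; first exact: Phi_W.
rewrite (Phi_lin _ (U_qproj u) Uu) qcoord_lin Phi_qproj qcoord_sum.
by under eq_bigr => i _ do rewrite qcoord_uk; rewrite sum_mul_delta mulN1r addNr.
Qed.

Lemma dual_elt_expand l u : dual_elt U V l -> U u ->
  l u = \sum_(i < n) qcoord (Phi u) i * l (uk i).
Proof.
move=> [l_lin l_V] Uu; have := l_V _ (V_sub_qproj Uu).
rewrite (l_lin _ _ _ (U_qproj u) Uu).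
rewrite (@linear_on_ps_lincomb _ _ U U0 U_lin k^o l l_lin _ _ _ _ U_uk).
by move/eqP; rewrite mulN1r addrC subr_eq0 => /eqP.
Qed.

End BasisPreimages.

(* A basis-dependent perfect pairing of [W / W'] with [U / V]. *)
Definition qpair (w : D) (u : R) : k := \sum_(i < n) qcoord w i * qcoord (Phi u) i.

Lemma qpair_linl c w w' u : qpair (c *: w + w') u = c * qpair w u + qpair w' u.
Proof.
rewrite /qpair mulr_sumr -big_split; apply: eq_bigr => i _ /=.
by rewrite qcoord_lin mulrDl mulrA.
Qed.

Lemma qpair_linr c w u v : U u -> U v ->
  qpair w (ps_add (ps_scale c u) v) = c * qpair w u + qpair w v.
Proof.
move=> Uu Uv; rewrite /qpair mulr_sumr -big_split; apply: eq_bigr => i _ /=.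
by rewrite Phi_lin // qcoord_lin mulrDr mulrCA.
Qed.

Lemma dual_quot_iso_qpair : dual_quot_iso U V W W'.
Proof.
have [uk /all_and2[U_uk qcoord_uk]] := exists_basis_preimages.
exists qpair; split.
- move=> w _; split=> [c u v|v Vv]; first exact: qpair_linr.
  rewrite /qpair big1 // => i _.
  by rewrite (qcoord_W' _ ((Phi_ker (VU Vv)).2 Vv)) mulr0.
- by move=> c w w' u _ _ _; apply: qpair_linl.
- move=> w Ww; split=> [w0|W'w u _]; last first.
    by rewrite /qpair big1 // => i _; rewrite qcoord_W' // mul0r.
  apply: W'_qcoord => // i; rewrite -(w0 _ (U_uk i)) /qpair.
  by under eq_bigr => i' _ do rewrite qcoord_uk eq_sym; rewrite sum_mul_delta.
- move=> l l_dual.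
  pose s := \sum_(i < n) l (uk i) *: (vbasis C)`_i.
  have sC : s \in C.
    by apply: memv_suml => i _; rewrite memvZ // vbasis_mem // mem_nth // size_tuple.
  exists (of_coords s).
    apply/WE; rewrite of_coordsK msize_of_coords; split=> //.
    exact: subvP (diffvSl _ _) _ sC.
  move=> u Uu; rewrite (dual_elt_expand U_uk qcoord_uk l_dual Uu).
  apply: eq_bigr => i _; rewrite mulrC qcoord_of_coords // coord_sum_free //.
  exact: basis_free (vbasisP C).
Qed.

End DualOfQuotient.

Lemma dual_quot_iso_of_quot_iso (k : fieldType) (r j : nat)
    (U V : pseries k r -> Prop) (W W' : {mpoly k[r]} -> Prop)
    (SW SW' : {vspace coords k r j}) :
  quot_iso U V W W' -> U (fun _ => 0) ->
  (forall c u v, U u -> U v -> U (ps_add (ps_scale c u) v)) ->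
  (forall v, V v -> U v) ->
  (forall w, W w <-> (msize w <= j.+1)%N /\ to_coords j w \in SW) ->
  (forall w, W' w <-> (msize w <= j.+1)%N /\ to_coords j w \in SW') ->
  dual_quot_iso U V W W'.
Proof.
move=> [Phi [Phi_lin Phi_W Phi_onto Phi_ker]] U0 U_lin VU WE W'E.
exact: dual_quot_iso_qpair U0 U_lin VU WE W'E Phi_lin Phi_W Phi_onto Phi_ker.
Qed.

Section QuotientModel.
Variables (k : fieldType) (r : nat) (f : {mpoly k[r]}) (j : nat).
Hypothesis msize_f : msize f = j.+1.
Local Notation E := (coords k r j).
Local Notation contractf := (contractf f j).

(* The indices [t], [t1], [s1] are parameters so that both formulas are instances. *)
Lemma CA_quotient_model (a : nat) (i t t1 s1 : int) :
  t = j%:Z - a%:Z - i -> t1 = j%:Z - a%:Z - 1 - i -> s1 = i + 1 ->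
  exists X X' Z : {vspace E},
  [/\ (X' <= X)%VS, (forall e, e \in X -> exists p, e = contractf p),
      (forall p, CApre f j a%:Z i p <-> contractf p \in (X + Z)%VS),
      (forall p, CApre f j (a%:Z + 1) i p <-> contractf p \in (X' + Z)%VS) &
      (forall w, mcf f i t w <-> (msize w <= j.+1)%N /\ to_coords j w \in X) /\
      (forall w, (exists F1 F2, [/\ mcf f i t1 F1, mcf f s1 t F2 & w = F1 + F2]) <->
         (msize w <= j.+1)%N /\ to_coords j w \in (X' + Z :&: X)%VS)].
Proof.
move=> -> -> ->.
have [Mi powi] := exists_mpow_space f j i.
have [Mi1 powi1] := exists_mpow_space f j (i + 1).
have [Dt dlet] := exists_dle_space k r j (j%:Z - a%:Z - i).
have [Dt1 dlet1] := exists_dle_space k r j (j%:Z - a%:Z - 1 - i).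
have sDt1Dt : (Dt1 <= Dt)%VS.
  by apply/subvP => e /dlet1 e0; apply/dlet => m hm; apply: e0; lia.
have sMi1Mi : (Mi1 <= Mi)%VS.
  apply/subvP => e /powi1[q hq ->]; apply/powi; exists q => // m hm.
  by apply: hq; lia.
exists (Mi :&: Dt)%VS, (Mi :&: Dt1)%VS, Mi1; split.
- exact: capvS.
- by move=> e /memv_capP[/powi[q _ ->] _]; exists q.
- by move=> p; apply: CApre_contractf.
- move=> p; apply: CApre_contractf => //.
  by have -> : j%:Z - (a%:Z + 1) - i = j%:Z - a%:Z - 1 - i by ring.
split=> w; first exact: mcf_to_coords.
by rewrite (mcf_sum_to_coords msize_f w powi dlet1 powi1 dlet) capvA (capv_idPl sMi1Mi).
Qed.

End QuotientModel.

Theorem lemma1p25 (k : fieldType) (r : nat) (f : {mpoly k[r]}) (j : nat)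
  (hdeg : msize f = j.+1) (a : nat) (i : int) :
  (* Q_A(a)_i = C_A(a)_i / C_A(a+1)_i *)
  quot_iso (CApre f j a%:Z i) (CApre f j (a%:Z + 1) i)
    (mcf f i (j%:Z - a%:Z - i))
    (fun F => exists F1 F2,
       [/\ mcf f i (j%:Z - a%:Z - 1 - i) F1,
           mcf f (i + 1) (j%:Z - a%:Z - i) F2 & F = F1 + F2])
  /\
  (* Q_A^v(a)_i = Hom_k(Q_A(a)_{j-a-i}, k) *)
  dual_quot_iso (CApre f j a%:Z (j%:Z - a%:Z - i))
    (CApre f j (a%:Z + 1) (j%:Z - a%:Z - i))
    (mcf f (j%:Z - a%:Z - i) i)
    (fun F => exists F1 F2,
       [/\ mcf f (j%:Z - a%:Z - i) (i - 1) F1,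
           mcf f (j%:Z + 1 - a%:Z - i) i F2 & F = F1 + F2]).
Proof.
split.
  have [X [X' [Z [sX'X XT UE VE [WE W'E]]]]] :=
    CA_quotient_model (a := a) (i := i) hdeg erefl erefl erefl.
  exact: (quot_iso_of_modular (@contractf_lin _ _ f j) sX'X XT UE VE WE W'E).
have [X [X' [Z [sX'X XT UE VE [WE W'E]]]]] :=
  CA_quotient_model (a := a) (i := j%:Z - a%:Z - i) (t := i) (t1 := i - 1)
    (s1 := j%:Z + 1 - a%:Z - i) hdeg ltac:(ring) ltac:(ring) ltac:(ring).
apply: (dual_quot_iso_of_quot_iso _ _ _ _ WE W'E).
- exact: (quot_iso_of_modular (@contractf_lin _ _ f j) sX'X XT UE VE WE W'E).
- by apply/UE; rewrite contractf0 mem0v.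
- by move=> c u v /UE uX /UE vX; apply/UE; rewrite contractf_lin memvD ?memvZ.
- by move=> v /VE vX; apply/UE; apply: subvP (addvS sX'X (subvv Z)) _ vX.
Qed.
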